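(* Let $s \geq 3$ be a fixed integer and $q$ a power of an odd prime. The graph $H^b(s,q)$ contains at least $(1 - o(1)) \frac{ q^{4 ( s - 1) } }{4}$ copies of $K_{2,2}$, where $o(1) \to 0$ as $q \to \infty$.
   Context: Let $N: \mathbb{F}_{q^{s-1}} \to \mathbb{F}_q$ be the norm map $N(X) = X^{1 + q + q^2 + \dots + q^{s - 2}}$. $H^b(s,q)$ is the bipartite graph with parts $A$ and $B$, each a disjoint copy of $\mathbb{F}_{q^{s-1}} \times \mathbb{F}_q^*$, where $(x_1,x_2)\in A$ is adjacent to $(y_1,y_2)\in B$ if and only if $N(x_1+y_1) = x_2 y_2$. *)

From mathcomp Require Import all_boot all_order all_algebra all_field.
Set Implicit Arguments. Unset Strict Implicit. Unset Printing Implicit Defensive.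
Import GRing.Theory Num.Theory.
Local Open Scope ring_scope.

(* Conventions: E plays the role of F_{q^{s-1}} (a finite field with
   q^(s-1) elements).  F_q is realised as its unique subfield of order q,
   i.e. the fixed points of x |-> x^q. *)

Definition Fq_star (E : finFieldType) (q : nat) : {set E} :=
  [set x : E | (x ^+ q == x) && (x != 0)].

Definition normN (E : finFieldType) (q s : nat) (x : E) : E :=
  x ^+ (\sum_(i < s.-1) q ^ i)%N.

Definition Hb_part (E : finFieldType) (q : nat) : {set E * E} :=
  [set v : E * E | v.2 \in Fq_star E q].

Definition Hb_adj (E : finFieldType) (q s : nat) (a b : E * E) : bool :=
  normN q s (a.1 + b.1) == a.2 * b.2.

(* Number of copies of K_{2,2} in H^b(s,q): pairs (S, T) with S a 2-subset
   of part A, T a 2-subset of part B, and all four edges present. (In a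
   bipartite graph every K_{2,2} subgraph has exactly two vertices on each side.) *)
Definition num_K22 (E : finFieldType) (q s : nat) : nat :=
  #|[set P : {set E * E} * {set E * E} |
      [&& P.1 \subset Hb_part E q, #|P.1| == 2%N,
          P.2 \subset Hb_part E q, #|P.2| == 2%N &
          [forall a in P.1, forall b in P.2, Hb_adj q s a b]]]|.

Definition odd_prime_power (q : nat) : Prop :=
  exists p k : nat, [/\ prime p, odd p, (0 < k)%N & q = (p ^ k)%N].

From mathcomp Require Import all_boot all_order all_algebra all_field.
From mathcomp Require Import ring lra zify.
Import Order.TTheory GRing.Theory Num.Theory.
Local Open Scope ring_scope.

(* Write Q = q^(s-1) = #|E| and m = (Q - 1)/(q - 1), the exponent of the norm.
   The norm maps E^* onto F_q^* with all fibres of size exactly m. For two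
   vertices (x1, x2), (x1', x2') of A with x1 != x1', each z != 1 in the fibre
   over x2'/x2 yields its own common neighbour in B, so such a pair has at least
   m - 1 common neighbours. There are Q (Q - 1) (q - 1)^2 / 2 such pairs, each
   contributing at least C(m - 1, 2) copies of K_{2,2}, which gives at least
   Q (Q - 1) (Q - q) (Q - 2q + 1) / 4 >= (1 - 6/q) Q^4 / 4 copies. *)

Lemma card_rootsXnC_le {F : finIdomainType} (n : nat) (c : F) :
  (0 < n)%N -> (#|[set x : F | x ^+ n == c]| <= n)%N.
Proof.
move=> n_gt0; have XnC_neq0 : 'X^n - c%:P != 0 by rewrite -size_poly_eq0 size_XnsubC.
rewrite cardE -ltnS -(size_XnsubC c n_gt0).
apply: max_poly_roots XnC_neq0 _ (enum_uniq _).
by apply/allP => x; rewrite mem_enum inE => /eqP xn; rewrite /root !hornerE xn subrr.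
Qed.

Lemma card_sigma_set {T U : finType} (A : {set T}) (B : T -> {set U}) :
  #|[set p : T * U | p.1 \in A & p.2 \in B p.1]| = (\sum_(x in A) #|B x|)%N.
Proof.
rewrite -sum1dep_card.
rewrite -(pair_big_dep (fun x => x \in A) (fun x y => y \in B x) (fun _ _ => 1%N)) /=.
by apply: eq_bigr => x _; rewrite sum1_card.
Qed.

Lemma set2_eq {T : finType} (a b x y : T) :
  [set a; b] = [set x; y] -> (a, b) = (x, y) \/ (a, b) = (y, x).
Proof.
move=> eq_ab_xy.
have: a \in [set x; y] by rewrite -eq_ab_xy set21.
have: b \in [set x; y] by rewrite -eq_ab_xy set22.
have: y \in [set a; b] by rewrite eq_ab_xy set22.
have: x \in [set a; b] by rewrite eq_ab_xy set21.
by rewrite !inE => /pred2P[] xa /pred2P[] ya /pred2P[] bx /pred2P[] ax; subst; auto.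
Qed.

Lemma leq_card_set2_imset {T : finType} (D : {set T * T}) :
  (#|D| <= 2 * #|[set [set p.1; p.2] | p in D]|)%N.
Proof.
rewrite -sum1_card (partition_big_imset (fun p => [set p.1; p.2])) /=.
rewrite mulnC -sum_nat_const; apply: leq_sum => _ /imsetP[[x y] _ ->].
rewrite sum1_card (leq_trans _ (_ : #|[set (x, y); (y, x)]| <= 2)%N) //.
  apply: subset_leq_card; apply/subsetP => -[a b]; rewrite !inE /=.
  by case/andP=> _ /eqP/set2_eq[]->; rewrite eqxx ?orbT.
by rewrite cards2 ltnS leq_b1.
Qed.

Lemma bin2_mul2 (n : nat) : ('C(n, 2) * 2 = n * n.-1)%N.
Proof. by rewrite bin_ffact ffactnS ffactn1. Qed.

Lemma quartic_lower_bound {R : realFieldType} {e r Q : R} :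
  3 <= r -> r ^+ 2 <= Q -> 6 <= e * r ->
  (1 - e) * Q ^+ 4 <= Q * (Q - 1) * (Q - r) * (Q - 2 * r + 1).
Proof.
move=> r_ge3 r2_le e_ge.
have Q_ge : 3 * r <= Q by nra.
have eQ_ge : 6 * r <= e * Q by nra.
pose t := Q - 2 * r.
have t_ge0 : 0 <= t by rewrite /t; lra.
have t3_le : Q * t ^+ 3 <= Q * (Q - 1) * (Q - r) * (Q - 2 * r + 1).
  rewrite !exprS expr0 mulr1 !mulrA.
  by do 3 (apply: ler_pM; rewrite ?mulr_ge0 /t //; try lra).
have binom3 : Q ^+ 4 - 6 * r * Q ^+ 3 <= Q * t ^+ 3.
  rewrite -subr_ge0 (_ : _ - _ = 4 * Q * r ^+ 2 * (3 * Q - 2 * r)); last by rewrite /t; ring.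
  by rewrite !mulr_ge0 //; lra.
have : 6 * r * Q ^+ 3 <= e * Q ^+ 4.
  rewrite (_ : e * Q ^+ 4 = e * Q * Q ^+ 3); last by ring.
  by apply: ler_wpM2r => //; apply: exprn_ge0; lra.
lra.
Qed.

Section CompleteBipartiteCount.
Context {V : finType} (P : {set V}) (adj : rel V).

Definition common_nbhd (S : {set V}) : {set V} :=
  [set b in P | [forall a in S, adj a b]].

Definition K22_copies : {set {set V} * {set V}} :=
  [set X : {set V} * {set V} | [&& X.1 \subset P, #|X.1| == 2%N, X.2 \subset P,
     #|X.2| == 2%N & [forall a in X.1, forall b in X.2, adj a b]]].

Lemma leq_card_K22_copies {Ss : {set {set V}}} {k : nat} :
  (forall S, S \in Ss -> S \subset P /\ #|S| = 2%N) ->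
  (forall S, S \in Ss -> k <= #|common_nbhd S|)%N ->
  (#|Ss| * 'C(k, 2) <= #|K22_copies|)%N.
Proof.
move=> Ss_pairs Ss_nbhd.
pose B S := [set T : {set V} | T \subset common_nbhd S & #|T| == 2%N].
have sub : [set X : {set V} * {set V} | X.1 \in Ss & X.2 \in B X.1] \subset K22_copies.
  apply/subsetP => -[S T]; rewrite !inE /= => /andP[/Ss_pairs[-> ->]].
  move=> /andP[TN ->]; move/subsetP: TN => TN; rewrite eqxx /=; apply/andP; split.
    by apply/subsetP => b /TN; rewrite inE => /andP[].
  apply/forall_inP => a aS; apply/forall_inP => b /TN.
  by rewrite inE => /andP[_ /forall_inP]; apply.
apply: leq_trans (subset_leq_card sub); rewrite card_sigma_set -sum_nat_const.
by apply: leq_sum => S /Ss_nbhd k_le; rewrite cards_draws leq_bin2l.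
Qed.

End CompleteBipartiteCount.

Definition norm_exp (q s : nat) : nat := \sum_(i < s.-1) q ^ i.

Lemma norm_exp_gt0 (q s : nat) : (1 < s)%N -> (0 < norm_exp q s)%N.
Proof. by case: s => [|[|n]] // _; rewrite /norm_exp big_ord_recl. Qed.

Lemma norm_exp_ge (q s : nat) : (2 < s)%N -> (q.+1 <= norm_exp q s)%N.
Proof.
by case: s => [|[|[|n]]] // _; rewrite /norm_exp /= !big_ord_recl addnA leq_addr.
Qed.

Section Hb.
Context {E : finFieldType} {q s : nat}.
Hypotheses (q_gt1 : (1 < q)%N) (s_gt1 : (1 < s)%N) (card_E : #|E| = (q ^ s.-1)%N).

Local Notation m := (norm_exp q s).
Local Notation N := (normN q s).
Local Notation Fs := (Fq_star E q).
Local Notation P := (Hb_part E q).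
Local Notation adj := (Hb_adj q s).

Let m_gt0 : (0 < m)%N := norm_exp_gt0 q s s_gt1.

Lemma predn_card_E : (#|E|.-1 = q.-1 * m)%N.
Proof. by rewrite card_E predn_exp. Qed.

Lemma normNM (x y : E) : N (x * y) = N x * N y.
Proof. exact: exprMn. Qed.

Lemma normN_eq0 (x : E) : (N x == 0) = (x == 0).
Proof. by rewrite /normN expf_eq0 m_gt0. Qed.

Lemma normN_Frobenius (x : E) : N x ^+ q = N x.
Proof.
have E_gt0 : (0 < #|E|)%N by rewrite card_E expn_gt0 ltnW.
have mq : (m * q = m.-1 + #|E|)%N by move: predn_card_E m_gt0 E_gt0; lia.
by rewrite /normN -exprM mq exprD expf_card -exprSr prednK.
Qed.

Lemma normN_Fq_star (x : E) : x != 0 -> N x \in Fs.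
Proof. by move=> x_neq0; rewrite inE normN_Frobenius eqxx normN_eq0. Qed.

Lemma Fq_star_div (x y : E) : x \in Fs -> y \in Fs -> x / y \in Fs.
Proof.
rewrite !inE => /andP[/eqP xq x_neq0] /andP[/eqP yq y_neq0].
by rewrite exprMn exprVn xq yq eqxx mulf_neq0 ?invr_eq0.
Qed.

Lemma card_Fq_star_le : (#|Fs| <= q.-1)%N.
Proof.
apply: (@leq_trans #|[set x : E | x ^+ q.-1 == 1]|); last first.
  by apply: card_rootsXnC_le; rewrite -subn1 subn_gt0.
apply/subset_leq_card/subsetP => x; rewrite !inE => /andP[/eqP xq x_neq0].
by apply/eqP/(mulIf x_neq0); rewrite -exprSr prednK ?mul1r ?xq // ltnW.
Qed.

Definition norm_fibre (c : E) : {set E} := [set z | N z == c].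

Lemma card_norm_fibre_le (c : E) : (#|norm_fibre c| <= m)%N.
Proof. exact: card_rootsXnC_le m_gt0. Qed.

Lemma sum_card_norm_fibre : (\sum_(c in Fs) #|norm_fibre c| = #|E|.-1)%N.
Proof.
rewrite -(cardsC1 (0 : E)) -sum1_card [RHS](partition_big N (mem Fs)) /=; last first.
  by move=> z; rewrite in_setC1; apply: normN_Fq_star.
apply: eq_bigr => c c_Fs; rewrite -sum1_card; apply: eq_bigl => z.
rewrite !inE; case: (eqVneq (N z) c) => [Nz_c|_]; rewrite ?andbF // andbT.
by rewrite -normN_eq0 Nz_c; move: c_Fs; rewrite inE => /andP[_ ->].
Qed.

Lemma card_Fq_star : #|Fs| = q.-1.
Proof.
apply/eqP; rewrite eqn_leq card_Fq_star_le -(leq_pmul2r m_gt0).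
rewrite -predn_card_E -sum_card_norm_fibre -sum_nat_const.
exact: leq_sum (fun c _ => card_norm_fibre_le c).
Qed.

Lemma card_norm_fibre (c : E) : c \in Fs -> #|norm_fibre c| = m.
Proof.
move=> c_Fs; apply/eqP; rewrite eqn_leq card_norm_fibre_le -subn_eq0 -leqn0.
have deficit0 : (\sum_(d in Fs) (m - #|norm_fibre d|) = 0)%N.
  rewrite sumnB => [|d _]; last exact: card_norm_fibre_le.
  by rewrite sum_nat_const sum_card_norm_fibre card_Fq_star predn_card_E mulnC subnn.
by rewrite -deficit0 (bigD1 c) //= leq_addr.
Qed.

Lemma num_K22E : num_K22 E q s = #|K22_copies P adj|.
Proof. by []. Qed.

Lemma Hb_partE : P = setX [set: E] Fs.
Proof. by apply/setP => -[x y]; rewrite !inE. Qed.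

(* For z != 1 with N z = x2' / x2, the vertex (w - x1, N w / x2) of B with
   w = (x1' - x1) / (z - 1) is adjacent to both, since x1' + (w - x1) = w z. *)
Lemma card_Hb_common_nbhd_ge (a a' : E * E) : a \in P -> a' \in P -> a.1 != a'.1 ->
  (m.-1 <= #|common_nbhd P adj [set a; a']|)%N.
Proof.
case: a a' => [x1 x2] [x1' x2']; rewrite Hb_partE !in_setX /= => /andP[_ x2_Fs].
move=> /andP[_ x2'_Fs] x1_neq.
have x2_neq0 : x2 != 0 by move: x2_Fs; rewrite inE => /andP[].
have d_neq0 : x1' - x1 != 0 by rewrite subr_eq0 eq_sym.
pose Z := norm_fibre (x2' / x2) :\ 1.
have card_Z : (m.-1 <= #|Z|)%N.
  have := cardsD1 1 (norm_fibre (x2' / x2)); rewrite card_norm_fibre ?Fq_star_div //.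
  by move=> ->; rewrite -subn1 leq_subLR leq_add2r leq_b1.
pose w z := (x1' - x1) / (z - 1).
pose nb z := (w z - x1, N (w z) / x2).
have nb_inj : {in Z &, injective nb}.
  by move=> z1 z2 _ _ [] /addIr /(mulfI d_neq0) /invr_inj /addIr.
apply: (leq_trans card_Z); rewrite -(card_in_imset nb_inj).
apply/subset_leq_card/subsetP => b /imsetP[z]; rewrite 3!inE => /andP[z_neq1 /eqP Nz] ->.
have w_neq0 : w z != 0 by rewrite /w mulf_neq0 // invr_eq0 subr_eq0.
rewrite inE in_setX in_setT Fq_star_div ?normN_Fq_star //=.
apply/forall_inP => _ /set2P[]-> /=; rewrite /Hb_adj /=.
  by rewrite addrC subrK mulrC divfK.
have -> : x1' + (w z - x1) = w z * z by rewrite /w; field; rewrite subr_eq0.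
by rewrite normNM Nz mulrCA mulrC.
Qed.

Lemma num_K22_ge :
  (#|E| * #|E|.-1 * q.-1 ^ 2 * 'C(m.-1, 2) <= 2 * num_K22 E q s)%N.
Proof.
pose D := [set p : (E * E) * (E * E) | p.1 \in P & p.2 \in [set b in P | b.1 != p.1.1]].
pose Ss := [set [set p.1; p.2] | p in D].
have card_D : #|D| = (#|E| * #|E|.-1 * q.-1 ^ 2)%N.
  have card_nbr (a : E * E) : #|[set b in P | b.1 != a.1]| = (#|E|.-1 * q.-1)%N.
    have -> : [set b in P | b.1 != a.1] = setX [set~ a.1] Fs.
      by apply/setP => -[x y]; rewrite !inE andbC.
    by rewrite cardsX cardsC1 card_Fq_star.
  rewrite (card_sigma_set P (fun a => [set b in P | b.1 != a.1])).
  rewrite (eq_bigr _ (fun a _ => card_nbr a)) sum_nat_const.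
  by rewrite Hb_partE cardsX cardsT card_Fq_star mulnACA -mulnn.
have Ss_pairs S : S \in Ss -> S \subset P /\ #|S| = 2%N.
  case/imsetP=> -[a a']; rewrite inE /= => /andP[aP]; rewrite inE => /andP[a'P neq] ->.
  split; first by apply/subsetP => x /set2P[]->.
  by rewrite cards2 (contraNneq _ neq) // => ->.
have Ss_nbhd S : S \in Ss -> (m.-1 <= #|common_nbhd P adj S|)%N.
  case/imsetP=> -[a a']; rewrite inE /= => /andP[aP]; rewrite inE => /andP[a'P neq] ->.
  by apply: card_Hb_common_nbhd_ge; rewrite // eq_sym.
rewrite num_K22E -card_D; apply: leq_trans (leq_mul (leq_card_set2_imset D) (leqnn _)) _.
by rewrite -mulnA leq_mul2l (leq_card_K22_copies P adj Ss_pairs Ss_nbhd) orbT.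
Qed.

Lemma four_num_K22_ge : (2 < s)%N ->
  (#|E| * (#|E| - 1) * (#|E| - q) * (#|E| - 2 * q + 1) <= 4 * num_K22 E q s)%N.
Proof.
move=> s_gt2; have num_ge := num_K22_ge.
have card_E1 := predn_card_E; have m_ge := norm_exp_ge q s s_gt2.
have -> : (#|E| - q = q.-1 * m.-1)%N by nia.
have -> : (#|E| - 2 * q + 1 = q.-1 * m.-1.-1)%N by nia.
have -> : (#|E| * (#|E| - 1) * (q.-1 * m.-1) * (q.-1 * m.-1.-1)
           = 2 * (#|E| * #|E|.-1 * q.-1 ^ 2 * 'C(m.-1, 2)))%N.
  by rewrite subn1 [in RHS]mulnC -[in RHS]mulnA bin2_mul2; ring.
by rewrite -[4%N]/(2 * 2)%N -(mulnA 2 2) leq_mul2l num_ge.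
Qed.

End Hb.

Theorem lemma4p5 (s : nat) (hs : (3 <= s)%N) :
  forall eps : rat, 0 < eps ->
  exists Q : nat, forall (q : nat), odd_prime_power q -> (Q <= q)%N ->
  forall E : finFieldType, #|E| = (q ^ s.-1)%N ->
    (1 - eps) * (q ^ (4 * s.-1))%:R / 4%:R <= (num_K22 E q s)%:R.
Proof.
move=> eps eps_gt0; exists (maxn 3 (Num.Def.archi_bound (6 / eps))).
move=> q _; rewrite geq_max => /andP[q_ge3 q_ge_bound] E card_E.
have q_sq_le : (q ^ 2 <= #|E|)%N by rewrite card_E leq_pexp2l //; lia.
have count := four_num_K22_ge (ltnW q_ge3) (ltnW hs) card_E hs.
have eps_q : 6 <= eps * q%:R.
  have bound_gt := archi_boundP (ltW (divr_gt0 (ltr0n _ 6) eps_gt0)).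
  rewrite -(ler_nat rat) in q_ge_bound.
  by rewrite -[6](divfK (lt0r_neq0 eps_gt0)) mulrC ler_pM2l //; lra.
rewrite mulnC expnM -card_E natrX ler_pdivrMr ?ltr0n //.
apply: le_trans (quartic_lower_bound (Q := #|E|%:R) _ _ eps_q) _.
- by rewrite ler_nat.
- by rewrite -natrX ler_nat.
have two_q_le : (2 * q <= #|E|)%N by nia.
move: count; rewrite -(ler_nat rat) !natrM natrD !natrB ?natrM //; try lia.
by rewrite [_ * 4]mulrC.
Qed.
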